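(* Let $(X,d)$ be a quasi-pseudometric space such that every $\bar d$-bounded sequence in $X$ contains a $d^s$-convergent subsequence, and let $f:X\to\mathbb{R}\cup\{\infty\}$ be a proper, bounded below, $d$-lower semicontinuous function. Then for every $x_0\in X$ and $\lambda>0$ there exists $z\in X$ such that (i) $f(z)+\lambda\, d(z,x_0)\le f(x_0)$; (ii) $f(y)=f(z)$ for all $y\in S_\lambda(z)$; (iii) $f(z)<f(x)+\lambda\, d(x,z)$ for all $x\in X\setminus S_\lambda(z)$; (iv) for every sequence $(x_n)$ in $X$, if $f(x_n)+\lambda\, d(x_n,z)\to f(z)$, then $\lim_{n\to\infty} d(x_n,z)=0$.
   Context: A quasi-pseudometric on $X$ is a map $d:X\times X\to[0,\infty)$ with $d(x,x)=0$ and $d(x,z)\le d(x,y)+d(y,z)$ for all $x,y,z$. The topology $\tau_d$ has neighborhood base at $x$ the balls $\{y: d(x,y)<r\}$, $r>0$; ''$d$-lower semicontinuous'' means lower semicontinuous for $\tau_d$. Set $\bar d(x,y)=d(y,x)$ and $d^s=\max\{d,\bar d\}$; $x_n\to x$ in $d^s$ iff $d(x,x_n)\to0$ and $d(x_n,x)\to0$. A sequence is $\bar d$-bounded if there are $x\in X$, $r>0$ with $\bar d(x,x_n)\le r$ for all $n$. $f$ is proper if $\operatorname{dom} f=\{x:f(x)<\infty\}\ne\emptyset$. For $\alpha>0$, $S_\alpha(x)=\{y\in X: f(y)+\alpha\, d(y,x)\le f(x)\}$. *)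

From HB Require Import structures.
From mathcomp Require Import all_boot all_order all_algebra.
From mathcomp Require Import all_classical all_reals all_analysis.
Set Implicit Arguments. Unset Strict Implicit. Unset Printing Implicit Defensive.
Import Order.TTheory GRing.Theory Num.Theory.
Import numFieldNormedType.Exports.
Local Open Scope ring_scope.
Local Open Scope classical_set_scope.
Local Open Scope ereal_scope.

Definition quasi_pseudometric {R : realType} {X : Type} (d : X -> X -> R) : Prop :=
  (forall x y, (0 <= d x y)%R) /\ (forall x, d x x = 0%R) /\
  (forall x y z, (d x z <= d x y + d y z)%R).

Definition dbar {R : realType} {X : Type} (d : X -> X -> R) : X -> X -> R :=
  fun x y => d y x.
Definition dsym {R : realType} {X : Type} (d : X -> X -> R) : X -> X -> R :=
  fun x y => Num.max (d x y) (dbar d x y).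

Definition dbar_bounded {R : realType} {X : Type} (d : X -> X -> R) (u : nat -> X) : Prop :=
  exists x : X, exists r : R, (0 < r)%R /\ forall n, (dbar d x (u n) <= r)%R.

Definition dsym_converges {R : realType} {X : Type} (d : X -> X -> R) (u : nat -> X) (x : X) : Prop :=
  ((fun n => d x (u n)) @ \oo --> 0%R) /\ ((fun n => d (u n) x) @ \oo --> 0%R).

Definition dbar_bounded_seq_compact {R : realType} {X : Type} (d : X -> X -> R) : Prop :=
  forall u : nat -> X, dbar_bounded d u ->
    exists phi : nat -> nat, {homo phi : m n / (m < n)%N >-> (m < n)%N} /\
      exists x : X, dsym_converges d (u \o phi) x.

(* lower semicontinuity for tau_d, whose neighborhood base at x is the balls
   {y | d x y < r}, r > 0 *)
Definition d_lsc {R : realType} {X : Type} (d : X -> X -> R) (f : X -> \bar R) : Prop :=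
  forall x : X, forall t : \bar R, t < f x ->
    exists r : R, (0 < r)%R /\ forall y, (d x y < r)%R -> t < f y.

(* f : X -> R \cup {+oo}: never -oo *)
Definition no_minus_infty {R : realType} {X : Type} (f : X -> \bar R) : Prop :=
  forall x, f x != -oo.

Definition proper_fun {R : realType} {X : Type} (f : X -> \bar R) : Prop :=
  exists x, f x < +oo.

Definition bounded_below {R : realType} {X : Type} (f : X -> \bar R) : Prop :=
  exists m : R, forall x, m%:E <= f x.

Definition S_set {R : realType} {X : Type} (d : X -> X -> R) (f : X -> \bar R)
  (alpha : R) (x : X) : set X :=
  [set y | f y + (alpha * d y x)%:E <= f x].

From HB Require Import structures.
From mathcomp Require Import all_boot all_order all_algebra.
From mathcomp Require Import all_classical all_reals all_analysis.
From mathcomp Require Import lra.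
Import Order.TTheory GRing.Theory Num.Theory.
Import numFieldNormedType.Exports.
Local Open Scope ring_scope.
Local Open Scope classical_set_scope.

(* Starting from a point a with f a finite, minimize f over the slope set
   S_lambda(a).  A minimizing sequence lies in S_lambda(a), so it is
   dbar-bounded (f is bounded below) and has a d^s-convergent subsequence; by
   lower semicontinuity its limit w lies in S_lambda(a) and f w is the infimum.
   Since y in S_lambda(w) implies y in S_lambda(a), every such y satisfies
   f y >= f w, which forces f y = f w and d(y, w) = 0.  Property (iv) follows
   by the same compactness: a sequence with f(x_n) + lambda d(x_n, z) -> f z
   but d(x_n, z) >= e infinitely often has a cluster point w in S_lambda(z),
   so d(w, z) = 0 and d(x_n, z) <= d(x_n, w) -> 0 along it. *)

Lemma near_infty_comp (sigma : nat -> nat) (P : nat -> Prop) :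
  (forall n, (n <= sigma n)%N) ->
  (\forall n \near \oo, P n) -> \forall n \near \oo, P (sigma n).
Proof. by move=> sigma_ge [N _ PN]; exists N => // n /leq_trans/(_ (sigma_ge n))/PN. Qed.

Lemma cvge_ltD {R : realFieldType} {T : Type} {F : set_system T} {FF : Filter F}
    (g : T -> \bar R) (l : \bar R) :
  l \is a fin_num -> g @ F --> l ->
  forall e : R, 0 < e -> \forall t \near F, (g t < l + e%:E)%E.
Proof.
move=> /fineK <- /fine_cvgP [g_fin gl] e e0.
near=> t; have /fineK <- : g t \is a fin_num by near: t.
rewrite -EFinD lte_fin; near: t.
by apply: cvgr_lt gl _ _; rewrite ltrDl.
Unshelve. all: by end_near.
Qed.

Section QuasiPseudometricLsc.
Context {R : realType} {X : Type} {d : X -> X -> R} {f : X -> \bar R}.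
Hypothesis hd : quasi_pseudometric d.
Hypothesis hlsc : d_lsc d f.

Let d_triangle x y z : d x z <= d x y + d y z := hd.2.2 x y z.

Lemma S_set_refl (lambda : R) (a : X) : S_set d f lambda a a.
Proof. by rewrite /S_set /= hd.2.1 mulr0 adde0. Qed.

Lemma d_lsc_cvg {w : X} {u : nat -> X} {c : \bar R} :
  (fun n => d w (u n)) @ \oo --> 0 ->
  (forall e, 0 < e -> \forall n \near \oo, (f (u n) <= c + e%:E)%E) ->
  (f w <= c)%E.
Proof.
move=> dwu fu; apply/lee_addgt0Pr => e e0; rewrite leNgt; apply/negP.
move=> /hlsc [r [r0 fr]]; have e2 : 0 < e / 2 by rewrite divr_gt0.
have [n [/fr ce_lt fu_le]] := filter_ex (filterI (cvgr_lt _ dwu _ r0) (fu _ e2)).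
have := lt_le_trans ce_lt fu_le.
by case: c {fr ce_lt fu fu_le} => [c||] //; rewrite -!EFinD lte_fin; lra.
Qed.

Lemma S_set_closed {lambda : R} {a w : X} {u : nat -> X} {c : \bar R} :
  0 <= lambda -> (fun n => d w (u n)) @ \oo --> 0 ->
  (forall e, 0 < e ->
    \forall n \near \oo, (f (u n) + (lambda * d (u n) a)%:E <= c + e%:E)%E) ->
  (f w + (lambda * d w a)%:E <= c)%E.
Proof.
move=> l0 dwu fu; rewrite -leeBrDr //; apply: (d_lsc_cvg dwu) => e e0.
have e2 : 0 < e / 2 by rewrite divr_gt0.
have ldwu : \forall n \near \oo, lambda * d w (u n) < e / 2.
  by apply: (cvgr_lt 0 _ _ e2); rewrite -(mulr0 lambda); exact: cvgMl_tmp.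
near=> n; rewrite addeAC leeBrDr //.
apply: (@le_trans _ _ (f (u n) + (lambda * d (u n) a + e / 2)%:E)%E).
  rewrite leeD2l // lee_fin.
  have := ler_wpM2l l0 (d_triangle w (u n) a); rewrite mulrDr.
  have : lambda * d w (u n) < e / 2 by near: n.
  lra.
have -> : (c + e%:E = c + (e / 2)%:E + (e / 2)%:E)%E by rewrite -addeA -EFinD -splitr.
by rewrite EFinD addeA leeD2r //; near: n; exact: fu.
Unshelve. all: by end_near.
Qed.

Lemma S_set_trans {lambda : R} {a z y : X} : 0 <= lambda ->
  S_set d f lambda z y -> S_set d f lambda a z -> S_set d f lambda a y.
Proof.
rewrite /S_set /= => l0 yz za; apply: le_trans za; apply: le_trans (leeD2r _ yz).
by rewrite -addeA -EFinD leeD2l // lee_fin -mulrDr ler_wpM2l.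
Qed.

End QuasiPseudometricLsc.

Section SlopeSets.
Context {R : realType} {X : Type} {d : X -> X -> R} {f : X -> \bar R}.
Hypothesis hd : quasi_pseudometric d.
Hypothesis hcomp : dbar_bounded_seq_compact d.
Hypothesis hbdd : bounded_below f.
Hypothesis hlsc : d_lsc d f.
Context {lambda : R}.
Hypothesis lambda_gt0 : 0 < lambda.

Local Notation S := (S_set d f lambda).

Let d_ge0 x y : 0 <= d x y := hd.1 x y.
Let d_triangle x y z : d x z <= d x y + d y z := hd.2.2 x y z.
Let lambda_ge0 : 0 <= lambda := ltW lambda_gt0.

Lemma S_set_fin_num {a z : X} : (f a < +oo)%E -> S a z -> f z \is a fin_num.
Proof.
have [m fm] := hbdd; rewrite /S_set /= => fa az.
rewrite fin_numE gt_eqF ?(lt_le_trans (ltNyr m)) //= -ltey (le_lt_trans _ fa) //.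
by rewrite (le_trans _ az) // leeDl // lee_fin mulr_ge0.
Qed.

Lemma dbar_bounded_of_S {a : X} {C : \bar R} {u : nat -> X} : C \is a fin_num ->
  (forall n, (f (u n) + (lambda * d (u n) a)%:E <= C)%E) -> dbar_bounded d u.
Proof.
have [m fm] := hbdd; case: C => [c _ uC| //| //].
have bound n : m + lambda * d (u n) a <= c.
  by rewrite -lee_fin EFinD (le_trans _ (uC n)) // leeD2r.
have cm : 0 <= (c - m) / lambda.
  by rewrite divr_ge0 // subr_ge0 (le_trans _ (bound 0%N)) // lerDl mulr_ge0.
exists a, ((c - m) / lambda + 1); split => [|n]; first lra.
have : d (u n) a <= (c - m) / lambda.
  by rewrite ler_pdivlMr // mulrC; have := bound n; lra.
rewrite /dbar; lra.
Qed.

Lemma S_set_le_eq {w y : X} : f w \is a fin_num -> (f w <= f y)%E -> S w y ->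
  f y = f w /\ d y w = 0.
Proof.
rewrite /S_set /= => w_fin wy yw.
have fyw : f y = f w.
  by apply/le_anti; rewrite wy (le_trans _ yw) // leeDl // lee_fin mulr_ge0.
split=> //; move: yw; rewrite fyw -[leRHS]adde0 leeD2lE // lee_fin => ldyw.
by apply/eqP; rewrite eq_le d_ge0 andbT -(pmulr_rle0 _ lambda_gt0).
Qed.

Lemma S_set_inf_fin_num {a : X} : (f a < +oo)%E -> ereal_inf (f @` S a) \is a fin_num.
Proof.
have [m fm] := hbdd => fa; rewrite fin_numE; apply/andP; split.
  by rewrite gt_eqF // (lt_le_trans (ltNyr m)) //; apply: le_ereal_inf_tmp => _ [y _ <-].
rewrite -ltey (le_lt_trans _ fa) //; apply: ereal_inf_lbound.
by exists a => //; exact: S_set_refl hd lambda a.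
Qed.

Lemma exists_S_set_minimal {a : X} : (f a < +oo)%E ->
  exists2 z, S a z & forall y, S z y -> f y = f z /\ d y z = 0.
Proof.
move=> fa; set I := ereal_inf (f @` S a).
have I_fin : I \is a fin_num := S_set_inf_fin_num fa.
have /choice[u uS] : forall n : nat, exists y, S a y /\ (f y < I + n.+1%:R^-1%:E)%E.
  move=> n; have n_gt0 : 0 < n.+1%:R^-1 :> R by rewrite invr_gt0.
  by have [_ [y ay <-] fy] := lb_ereal_inf_adherent n_gt0 I_fin; exists y.
have a_fin := S_set_fin_num fa (S_set_refl hd lambda a).
have [phi [phi_incr [w [dwu _]]]] :=
  hcomp _ (dbar_bounded_of_S a_fin (fun n => (uS n).1)).
have aw : S a w.
  apply: (S_set_closed hd hlsc lambda_ge0 dwu) => e e0; apply: nearW => n /=.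
  by rewrite (le_trans (uS _).1) // leeDl // lee_fin ltW.
have wI : (f w <= I)%E.
  apply: (d_lsc_cvg hlsc dwu) => e e0.
  apply: (@near_infty_comp _ (fun k => f (u k) <= I + e%:E)%E
    (unstable.mono_leq_infl (leq_mono phi_incr))).
  near=> k; rewrite (le_trans (ltW (uS k).2)) // leeD2l // lee_fin ltW //.
  by near: k; exact: (near_infty_natSinv_lt (PosNum e0)).
exists w => // y wy; apply: S_set_le_eq => //; first exact: S_set_fin_num fa aw.
rewrite (le_trans wI) //; apply: ereal_inf_lbound.
by exists y => //; exact: (S_set_trans hd lambda_ge0 wy aw).
Unshelve. all: by end_near.
Qed.

Lemma S_set_minimal_cvg {z : X} : f z \is a fin_num ->
  (forall y, S z y -> d y z = 0) ->
  forall u : nat -> X,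
    (fun n => (f (u n) + (lambda * d (u n) z)%:E)%E) @ \oo --> f z ->
    (fun n => d (u n) z) @ \oo --> 0.
Proof.
move=> z_fin z_min u uz.
have uz_le e : 0 < e ->
    \forall n \near \oo, (f (u n) + (lambda * d (u n) z)%:E <= f z + e%:E)%E.
  by move=> e0; near=> n; apply: ltW; near: n; exact: cvge_ltD.
apply/cvgrPdist_lt => e e0; apply: contrapT => far.
have [N0 _ uN0] := uz_le 1 ltr01.
have /choice[psi psi_far] : forall n, exists k, (n + N0 <= k)%N /\ e <= d (u k) z.
  move=> n; apply: contrapT => none; apply: far.
  exists (n + N0)%N => // k /= nk; rewrite sub0r normrN ger0_norm // ltNge.
  by apply/negP => ek; apply: none; exists k.
have fz1_fin : f z + 1%:E \is a fin_num by rewrite fin_numD z_fin.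
have [phi [phi_incr [w [dwv dvw]]]] := hcomp _ (dbar_bounded_of_S fz1_fin
  (fun n => uN0 _ (leq_trans (leq_addl _ _) (psi_far n).1))).
have sigma_ge n : (n <= psi (phi n))%N.
  apply: leq_trans (unstable.mono_leq_infl (leq_mono phi_incr) n) _.
  exact: leq_trans (leq_addr _ _) (psi_far _).1.
have zw : S z w.
  apply: (S_set_closed hd hlsc lambda_ge0 dwv) => e' e'0.
  exact: (@near_infty_comp _
    (fun k => f (u k) + (lambda * d (u k) z)%:E <= f z + e'%:E)%E sigma_ge (uz_le _ e'0)).
have [n /= vw_lt] := filter_ex (cvgr_lt 0 dvw _ e0).
have := d_triangle (u (psi (phi n))) w z; rewrite (z_min w zw) addr0.
by have := (psi_far (phi n)).2; lra.
Unshelve. all: by end_near.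
Qed.

End SlopeSets.

Theorem mainTheorem3 (R : realType) (X : Type) (d : X -> X -> R) (f : X -> \bar R)
  (hd : quasi_pseudometric d) (hcomp : dbar_bounded_seq_compact d)
  (hfinf : no_minus_infty f) (hprop : proper_fun f) (hbdd : bounded_below f)
  (hlsc : d_lsc d f) :
  forall (x0 : X) (lambda : R), 0 < lambda ->
  exists z : X,
    ((f z + (lambda * d z x0)%:E <= f x0)%E) /\
    (forall y, S_set d f lambda z y -> f y = f z) /\
    (forall x, ~ S_set d f lambda z x -> (f z < f x + (lambda * d x z)%:E)%E) /\
    (forall u : nat -> X,
        (fun n => (f (u n) + (lambda * d (u n) z)%:E)%E) @ \oo --> f z ->
        (fun n => d (u n) z) @ \oo --> 0).
Proof.
move=> x0 lambda l0.
have [a fa ax0] :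
    exists2 a, (f a < +oo)%E & S_set d f lambda a `<=` S_set d f lambda x0.
  have [fx0|] := ltP (f x0) +oo%E; first by exists x0.
  rewrite leye_eq => /eqP fx0; have [a fa] := hprop.
  by exists a => // y _; rewrite /S_set /= fx0 leey.
have [z az z_min] := exists_S_set_minimal hd hcomp hbdd hlsc l0 fa.
exists z; split; first exact: ax0.
split; first by move=> y /z_min[].
split; first by move=> x /negP; rewrite -ltNge.
apply: (S_set_minimal_cvg hd hcomp hbdd hlsc l0 (S_set_fin_num hd hbdd l0 fa az)).
by move=> y /z_min[].
Qed.
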